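(* Let $S$ be a numerical semigroup with minimal generators $g_1<\dots<g_\nu$, multiplicity $m=g_1$ and Frobenius number $f$. The following are equivalent: (i) $\mathrm{Ap}(S)$ is $\alpha$-rectangular, i.e. $\mathrm{Ap}(S)=\{\sum_{i=2}^{\nu}\lambda_i g_i : 0\le\lambda_i\le\alpha_i\}$; (ii) the poset $(\mathrm{Ap}(S),\preceq)$ has exactly one maximal element, and this element has a unique representation; (iii) $S$ is symmetric and $\mathrm{Ap}(S)$ is of unique expression; (iv) $f+m=\sum_{i=2}^{\nu}\alpha_i g_i$; (v) $m=\prod_{i=2}^{\nu}(\alpha_i+1)$.
   Context: A numerical semigroup is a submonoid $S$ of $(\mathbb N,+)$ with finite complement in $\mathbb N$; $g_1<\dots<g_\nu$ denotes its minimal system of generators, $m=g_1$ its multiplicity and $f=\max(\mathbb Z\setminus S)$ its Frobenius number. For $s,t\in S$, $s\preceq t$ means $t-s\in S$. The Apéry set is $\mathrm{Ap}(S)=\{s\in S: s-m\notin S\}$. A representation of $s\in S$ is an expression $s=\sum_{i=1}^\nu \lambda_i g_i$ with $\lambda_i\in\mathbb N$. For $i=2,\dots,\nu$, $\alpha_i=\max\{h\in\mathbb N: hg_i\in\mathrm{Ap}(S)\}$. $S$ is symmetric if for every $x\in\mathbb Z$: $x\in S\iff f-x\notin S$. $\mathrm{Ap}(S)$ is of unique expression if every element of $\mathrm{Ap}(S)$ has a unique representation. *)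

From Stdlib Require Import ZArith.
From mathcomp Require Import all_boot.
Set Implicit Arguments. Unset Strict Implicit. Unset Printing Implicit Defensive.

Definition numerical_semigroup (S : nat -> Prop) : Prop :=
  S 0 /\ (forall x y, S x -> S y -> S (x + y)) /\
  exists N, forall n, N <= n -> S n.

Definition inZ (S : nat -> Prop) (x : Z) : Prop :=
  exists n : nat, x = Z.of_nat n /\ S n.

(* s = sum_i lam_i g_i, the (0-based) indices of gs being 0 .. size gs - 1. *)
Definition is_rep (gs : seq nat) (s : nat) (lam : nat -> nat) : Prop :=
  s = \sum_(i < size gs) lam i * nth 0 gs i.

Definition generates (S : nat -> Prop) (gs : seq nat) : Prop :=
  forall x, S x <-> exists lam, is_rep gs x lam.

Definition min_gen_system (S : nat -> Prop) (gs : seq nat) : Prop :=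
  sorted ltn gs /\ generates S gs /\
  forall gs', subseq gs' gs -> generates S gs' -> gs' = gs.

Definition is_frobenius (S : nat -> Prop) (f : Z) : Prop :=
  ~ inZ S f /\ forall x : Z, (f < x)%Z -> inZ S x.

Definition Ap (S : nat -> Prop) (m s : nat) : Prop :=
  S s /\ ~ (m <= s /\ S (s - m)).

Definition preceq (S : nat -> Prop) (s t : nat) : Prop :=
  s <= t /\ S (t - s).

(* alpha_i = max {h : h g_i in Ap(S)}, for 0-based indices 1 <= i < size gs
   (i.e. paper's indices 2..nu). *)
Definition is_alpha (S : nat -> Prop) (gs : seq nat) (alpha : nat -> nat) : Prop :=
  forall i, 1 <= i < size gs ->
    Ap S (nth 0 gs 0) (alpha i * nth 0 gs i) /\
    forall h, Ap S (nth 0 gs 0) (h * nth 0 gs i) -> h <= alpha i.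

Definition symmetric_sg (S : nat -> Prop) (f : Z) : Prop :=
  forall x : Z, inZ S x <-> ~ inZ S (f - x)%Z.

Definition unique_rep (gs : seq nat) (s : nat) : Prop :=
  exists lam, is_rep gs s lam /\
    forall lam', is_rep gs s lam' -> forall i, i < size gs -> lam' i = lam i.

Definition Ap_unique_expression (S : nat -> Prop) (gs : seq nat) : Prop :=
  forall s, Ap S (nth 0 gs 0) s -> unique_rep gs s.

Definition Ap_maximal (S : nat -> Prop) (m a : nat) : Prop :=
  Ap S m a /\ forall b, Ap S m b -> preceq S a b -> b = a.

Definition alpha_rectangular (S : nat -> Prop) (gs : seq nat) (alpha : nat -> nat) : Prop :=
  forall x, Ap S (nth 0 gs 0) x <->
    exists lam : nat -> nat,
      (forall i, 1 <= i < size gs -> lam i <= alpha i) /\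
      x = \sum_(1 <= i < size gs) lam i * nth 0 gs i.

From Stdlib Require Import ZArith Lia Classical.
From mathcomp Require Import all_boot zify.
Set Implicit Arguments. Unset Strict Implicit.

(* Write m = g_1 and let M = sum_{i>=2} alpha_i g_i be the
   corner of the box of exponents 0 <= lambda_i <= alpha_i (in the file:
   wsum gs (corner alpha), written top inside the sections).  Every element of
   Ap(S) has a representation inside this box: a coefficient of g_1 would allow
   subtracting m, and lambda_i > alpha_i would put lambda_i g_i in Ap(S) by
   downward closure.  The theorem is organised around the hub statement
   M \in Ap(S).  Once it holds, every box element lies below M for <=_S, hence
   in Ap(S), and two box representations of one number coincide.  Each of the
   conditions (i)-(v) is shown equivalent to M \in Ap(S): (i) and (ii) by these
   domination/uniqueness facts, (iii) and (iv) by comparing M with f + m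
   through residues modulo m, and (v) by counting: the box has
   prod (alpha_i + 1) points and Ap(S) has exactly one element in each residue
   class mod m. *)

Section NumericalSemigroup.
Variable S : nat -> Prop.
Hypothesis hS : numerical_semigroup S.

Lemma S_0 : S 0.
Proof. by case: hS. Qed.

Lemma S_add x y : S x -> S y -> S (x + y).
Proof. by case: hS => _ [h _]; apply: h. Qed.

Lemma S_mul k x : S x -> S (k * x).
Proof.
move=> Sx; elim: k => [|k IH]; first by rewrite mul0n; exact: S_0.
by rewrite mulSn; apply: S_add.
Qed.

Lemma Ap_decomp m x : 0 < m -> S x -> exists w k, Ap S m w /\ x = w + k * m.
Proof.
move=> mpos; elim: x {-2}x (leqnn x) => [|n IH] x hx Sx.
- exists x, 0; split; last by rewrite addn0.
  by split => // -[h _]; lia.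
- case: (classic (m <= x /\ S (x - m))) => [[hmx Sxm]|hn].
  + have [w [k [hw e]]] := IH (x - m) ltac:(lia) Sxm.
    by exists w, k.+1; split => //; rewrite mulSn; lia.
  + by exists x, 0; split; last rewrite addn0.
Qed.

Lemma Ap_down m t u : Ap S m (t + u) -> S t -> S u -> Ap S m t.
Proof.
move=> [_ h] St Su; split => // -[hm Stm]; apply: h; split; first lia.
have -> : t + u - m = (t - m) + u by lia.
exact: S_add.
Qed.

Lemma Ap_res_unique m (Sm : S m) w w' :
  Ap S m w -> Ap S m w' -> w %% m = w' %% m -> w = w'.
Proof.
wlog le : w w' / w <= w'.
  move=> H a b e; case: (leqP w w') => h; first exact: H.
  by symmetry; apply: H => //; lia.
move=> [Sw _] [Sw' hw'] e.
have : m %| w' - w by rewrite -eqn_mod_dvd // e.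
case/dvdnP => -[|k] hk; first lia.
exfalso; apply: hw'; rewrite mulSn in hk; split; first lia.
have -> : w' - m = w + k * m by lia.
by apply: S_add => //; exact: S_mul.
Qed.

Lemma Ap_res_exists m (mpos : 0 < m) x : exists w, Ap S m w /\ w %% m = x %% m.
Proof.
have [N hN] := hS.2.2.
have Sy : S (N * m + x %% m).
  apply: hN; have : N <= N * m by rewrite leq_pmulr.
  lia.
have [w [k [hw e]]] := Ap_decomp mpos Sy.
exists w; split => //.
have : (N * m + x %% m) %% m = (w + k * m) %% m by rewrite e.
by rewrite modnMDl modn_mod addnC modnMDl.
Qed.

Lemma Ap_above_gap m (Sm : S m) (mpos : 0 < m) w k :
  Ap S m w -> ~ S k -> w %% m = k %% m -> exists j, w = k + j.+1 * m.
Proof.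
move=> [Sw _] nk e; case: (leqP w k) => h.
- exfalso; apply: nk.
  have : m %| k - w by rewrite -eqn_mod_dvd // e.
  case/dvdnP => j hj; have -> : k = w + j * m by lia.
  by apply: S_add => //; exact: S_mul.
- have : m %| w - k by rewrite -eqn_mod_dvd ?e //; lia.
  by case/dvdnP => -[|j] hj; [lia | exists j; lia].
Qed.

Lemma Ap_bounded m : exists B, forall w, Ap S m w -> w < B.
Proof.
have [N hN] := hS.2.2; exists (N + m) => w [Sw h].
rewrite ltnNge; apply/negP => le; apply: h; split; first lia.
by apply: hN; lia.
Qed.

(* Since Ap(S) is finite, every Apery element lies below a maximal one. *)
Lemma exists_maximal_above m x :
  Ap S m x -> exists b, Ap_maximal S m b /\ preceq S x b.
Proof.
have [B hB] := Ap_bounded m.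
move=> hx; have := hB x hx.
move: {2}(B - x) (leqnn (B - x)) => d; elim: d x hx => [|d IH] x hx hd hxB; first lia.
case: (classic (forall c, Ap S m c -> preceq S x c -> c = x)) => hmax.
  by exists x; split; [split | split; rewrite ?subnn; last exact: S_0].
have [c hc] := not_all_ex_not _ _ hmax.
have [hAc [[hxc Scx] hne]] : Ap S m c /\ preceq S x c /\ c <> x.
  case: (classic (Ap S m c)) => a; last by exfalso; apply: hc => /a.
  case: (classic (preceq S x c)) => p; last by exfalso; apply: hc => _ /p.
  by split => //; split => // e; apply: hc.
have [b [hb [hcb Sbc]]] := IH c hAc ltac:(have := hB c hAc; lia) (hB c hAc).
exists b; split => //; split; first lia.
have -> : b - x = (b - c) + (c - x) by lia.
exact: S_add.
Qed.

End NumericalSemigroup.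

Definition wsum (gs : seq nat) (lam : nat -> nat) : nat :=
  \sum_(i < size gs) lam i * nth 0 gs i.

Section WeightedSums.
Variable gs : seq nat.

Lemma wsum_add (l1 l2 : nat -> nat) :
  wsum gs l1 + wsum gs l2 = wsum gs (fun i => l1 i + l2 i).
Proof. by rewrite /wsum -big_split; apply: eq_bigr => i _; rewrite mulnDl. Qed.

Lemma wsum_ext (l1 l2 : nat -> nat) :
  (forall i, i < size gs -> l1 i = l2 i) -> wsum gs l1 = wsum gs l2.
Proof. by move=> h; apply: eq_bigr => i _; rewrite h. Qed.

Lemma wsum_split (lam : nat -> nat) i : i < size gs ->
  wsum gs lam = lam i * nth 0 gs i + wsum gs (fun j => if j == i then 0 else lam j).
Proof.
move=> hi; rewrite /wsum (bigD1 (Ordinal hi)) //= [X in _ = _ + X](bigD1 (Ordinal hi)) //=.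
rewrite eqxx mul0n add0n; congr (_ + _); apply: eq_bigr => j hj.
suff /negbTE -> : nat_of_ord j != i by [].
by apply: contra hj => /eqP e; apply/eqP; exact: val_inj.
Qed.

Lemma wsum_unit i c : i < size gs ->
  wsum gs (fun j => if j == i then c else 0) = c * nth 0 gs i.
Proof.
move=> hi; rewrite (wsum_split _ hi) eqxx /wsum big1 ?addn0 //.
by move=> j _; case: eqP.
Qed.

Lemma wsum_split0 (lam : nat -> nat) : 0 < size gs ->
  wsum gs lam = lam 0 * nth 0 gs 0 + \sum_(1 <= i < size gs) lam i * nth 0 gs i.
Proof.
rewrite /wsum; case: gs => [//|g gs'] _ /=.
rewrite big_ord_recl; congr (_ + _).
by rewrite (@big_add1 _ _ _ 0) /= big_mkord.
Qed.

Lemma wsum_drop0 (lam : nat -> nat) : 0 < size gs ->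
  wsum gs (fun i => if i == 0 then 0 else lam i) =
  \sum_(1 <= i < size gs) lam i * nth 0 gs i.
Proof.
move=> h; rewrite (wsum_split0 _ h) /= mul0n add0n.
by apply: eq_big_nat => i /andP [h1 _]; case: eqP => // e; lia.
Qed.

Variable S : nat -> Prop.
Hypothesis hg : generates S gs.

Lemma S_wsum (lam : nat -> nat) : S (wsum gs lam).
Proof. by apply/hg; exists lam. Qed.

Lemma wsum_of_S x : S x -> exists lam, x = wsum gs lam.
Proof. by move/hg. Qed.

Lemma S_gen i : i < size gs -> S (nth 0 gs i).
Proof.
by move=> hi; have := S_wsum (fun j => if j == i then 1 else 0); rewrite wsum_unit // mul1n.
Qed.

End WeightedSums.

Definition corner (alpha : nat -> nat) (i : nat) : nat := if i == 0 then 0 else alpha i.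

Definition in_box (gs : seq nat) (alpha lam : nat -> nat) : Prop :=
  lam 0 = 0 /\ forall i, 1 <= i < size gs -> lam i <= alpha i.

Lemma corner_in_box gs alpha : in_box gs alpha (corner alpha).
Proof. by split => // i hi; rewrite /corner; case: eqP. Qed.

Lemma wsum_corner_split gs alpha lam : in_box gs alpha lam ->
  wsum gs (corner alpha) = wsum gs lam + wsum gs (fun i => corner alpha i - lam i).
Proof.
move=> [h0 hb]; rewrite wsum_add; apply: wsum_ext => i hi.
rewrite /corner; case: eqP => [->|ne]; first by rewrite h0.
by have := hb i ltac:(lia); lia.
Qed.

Section Box.
Variables (S : nat -> Prop) (gs : seq nat) (alpha : nat -> nat).
Hypotheses (hS : numerical_semigroup S) (hg : generates S gs).
Unset Implicit Arguments.
Hypothesis ha : is_alpha S gs alpha.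
Set Implicit Arguments.
Local Notation mult := (nth 0 gs 0).
Local Notation top := (wsum gs (corner alpha)).

Lemma mult_pos : 0 < mult.
Proof.
rewrite lt0n; apply/negP => /eqP m0.
case: (leqP (size gs) 1) => hsz.
- have [N hN] := hS.2.2.
  have [lam e] := wsum_of_S hg (hN N.+1 (leqnSn N)).
  suff : wsum gs lam = 0 by lia.
  apply: big1 => i _.
  have -> : nat_of_ord i = 0 by have := ltn_ord i; lia.
  by rewrite m0 muln0.
- have [[S_a1 hA] _] := ha 1 ltac:(lia).
  by apply: hA; rewrite m0 subn0.
Qed.

Lemma size_gs_pos : 0 < size gs.
Proof. by have := mult_pos; case: (gs). Qed.

Lemma S_mult : S mult.
Proof. exact: (S_gen hg size_gs_pos). Qed.

Lemma Ap_rep_in_box s lam : Ap S mult s -> s = wsum gs lam -> in_box gs alpha lam.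
Proof.
move=> hA e; split.
- case E: (lam 0) => [//|l]; exfalso; move: hA => [_]; apply.
  have := wsum_split lam size_gs_pos; rewrite E => e2.
  have SR := S_wsum hg (fun j => if j == 0 then 0 else lam j).
  split; first by rewrite e e2 mulSn; lia.
  have -> : s - mult = l * mult + wsum gs (fun j => if j == 0 then 0 else lam j).
    by rewrite e e2 mulSn; lia.
  by apply: S_add => //; apply: S_mul => //; exact: S_mult.
- move=> i /andP [h1 h2].
  have e2 := wsum_split lam h2.
  have hAi : Ap S mult (lam i * nth 0 gs i).
    apply: (Ap_down hS (u := wsum gs (fun j => if j == i then 0 else lam j))).
    + by rewrite -e2 -e.
    + by apply: S_mul => //; exact: S_gen.
    + exact: S_wsum.
  by have [_] := ha i ltac:(lia); apply.
Qed.

Hypothesis top_Ap : Ap S mult top.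

Lemma box_below_top lam : in_box gs alpha lam ->
  Ap S mult (wsum gs lam) /\ preceq S (wsum gs lam) top.
Proof.
move=> hb; have e := wsum_corner_split hb; split.
- apply: (Ap_down hS (u := wsum gs (fun i => corner alpha i - lam i))).
  + by rewrite -e.
  + exact: S_wsum.
  + exact: S_wsum.
- by split; rewrite e ?leq_addr // addKn; exact: S_wsum.
Qed.

Lemma Ap_below_top w : Ap S mult w -> preceq S w top.
Proof.
move=> hw; have [lam e] := wsum_of_S hg hw.1.
by rewrite e; exact: (box_below_top (Ap_rep_in_box hw e)).2.
Qed.

(* Distinct box vectors represent distinct numbers: if mu_i > lam_i, then
   corner - lam + mu would be a representation of the corner outside the box. *)
Lemma box_rep_le lam mu :
  in_box gs alpha lam -> in_box gs alpha mu -> wsum gs lam = wsum gs mu ->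
  forall i, i < size gs -> mu i <= lam i.
Proof.
move=> hl hm e i hi; rewrite leqNgt; apply/negP => lt.
have i0 : i != 0 by apply/eqP => i0; move: lt; rewrite i0 hl.1 hm.1.
pose k j := corner alpha j - lam j + mu j.
have ek : top = wsum gs k.
  suff : wsum gs k + wsum gs lam = top + wsum gs mu by rewrite e; lia.
  rewrite !wsum_add; apply: wsum_ext => j hj; rewrite /k /corner.
  case: eqP => [->|ne]; first by rewrite hl.1 hm.1.
  by have := hl.2 j ltac:(lia); lia.
have := (Ap_rep_in_box top_Ap ek).2 i ltac:(lia).
by rewrite /k /corner (negbTE i0); have := hl.2 i ltac:(lia); lia.
Qed.

Lemma box_rep_inj lam mu :
  in_box gs alpha lam -> in_box gs alpha mu -> wsum gs lam = wsum gs mu ->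
  forall i, i < size gs -> lam i = mu i.
Proof.
move=> hl hm e i hi; apply/eqP; rewrite eqn_leq.
by rewrite (box_rep_le hl hm e hi) (box_rep_le hm hl (esym e) hi).
Qed.

Lemma Ap_unique_rep s : Ap S mult s -> unique_rep gs s.
Proof.
move=> hs; have [lam e] := wsum_of_S hg hs.1.
exists lam; split => // lam' e' i hi.
exact: (box_rep_inj (Ap_rep_in_box hs e') (Ap_rep_in_box hs e) (etrans (esym e') e) hi).
Qed.

End Box.

Section Equivalences.
Variables (S : nat -> Prop) (gs : seq nat) (alpha : nat -> nat).
Hypotheses (hS : numerical_semigroup S) (hg : generates S gs).
Unset Implicit Arguments.
Hypothesis ha : is_alpha S gs alpha.
Set Implicit Arguments.
Local Notation mult := (nth 0 gs 0).
Local Notation top := (wsum gs (corner alpha)).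

(* An Apery element with a unique representation that dominates every
   alpha_i g_i is the corner: its unique representation must contain
   alpha_i copies of g_i. *)
Lemma unique_rep_dominating_is_top a :
  Ap S mult a -> unique_rep gs a ->
  (forall i, 1 <= i < size gs -> preceq S (alpha i * nth 0 gs i) a) ->
  a = top.
Proof.
move=> hA [lam [hl hu]] hp.
have [h0 hb] := Ap_rep_in_box hS hg ha hA hl.
rewrite hl; apply: wsum_ext => i hi; rewrite /corner.
case: eqP => [->//|ne]; apply/eqP; rewrite eqn_leq hb ?andTb; last lia.
have [hle Sd] := hp i ltac:(lia).
have [mu emu] := wsum_of_S hg Sd.
have : is_rep gs a (fun j => mu j + (if j == i then alpha i else 0)).
  change (a = wsum gs (fun j => mu j + (if j == i then alpha i else 0))).
  by rewrite -wsum_add wsum_unit // -emu; lia.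
by move/hu => /(_ i hi); rewrite eqxx => <-; exact: leq_addl.
Qed.

(* The Frobenius number is the largest gap; if the corner is Apery, it is the
   largest Apery element, hence f = top - m. *)
Lemma frobenius_of_top f : is_frobenius S f -> Ap S mult top ->
  (f + Z.of_nat mult = Z.of_nat top)%Z.
Proof.
move=> hf P.
have mpos := mult_pos hS hg ha; have Sm := S_mult hS hg ha.
case: (Z.lt_trichotomy (f + Z.of_nat mult) (Z.of_nat top)) => [lt|[//|gt]]; exfalso.
- have [n [en Sn]] := hf.2 (Z.of_nat top - Z.of_nat mult)%Z ltac:(lia).
  by apply: P.2; split; [lia | have -> : top - mult = n by lia].
- case: (Z.lt_ge_cases f 0) => fneg.
  + have Sm1 : S (mult - 1).
      have [n [en Sn]] := hf.2 (Z.of_nat (mult - 1)) ltac:(lia).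
      by have -> : mult - 1 = n by lia.
    have A1 : Ap S mult (mult - 1) by split => // -[h _]; lia.
    by have [le _] := Ap_below_top hS hg ha P A1; lia.
  + have [k ek] : exists k, f = Z.of_nat k by exists (Z.to_nat f); lia.
    have nk : ~ S k by move=> Sk; apply: hf.1; exists k.
    have [w [hw ew]] := Ap_res_exists hS mpos k.
    have [j ej] := Ap_above_gap hS Sm mpos hw nk ew.
    have [le _] := Ap_below_top hS hg ha P hw.
    by rewrite mulSn in ej; lia.
Qed.

Lemma rectangular_iff_top : alpha_rectangular S gs alpha <-> Ap S mult top.
Proof.
have sz := size_gs_pos hS hg ha.
split=> [h | P x].
  by apply/h; exists alpha; split => //; rewrite wsum_drop0.
split=> [hx | [lam [hb ->]]].
- have [lam e] := wsum_of_S hg hx.1.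
  have [h0 hb] := Ap_rep_in_box hS hg ha hx e.
  by exists lam; split => //; rewrite e (wsum_split0 _ sz) h0 mul0n add0n.
- rewrite -wsum_drop0 //; apply: (box_below_top hS hg P _).1.
  by split => // i hi; case: eqP => _; [| exact: hb].
Qed.

Lemma unique_maximal_iff_top :
  (exists a, Ap_maximal S mult a /\
     (forall b, Ap_maximal S mult b -> b = a) /\ unique_rep gs a)
  <-> Ap S mult top.
Proof.
split=> [[a [[hA _] [huniq hur]]] | P].
  rewrite -(unique_rep_dominating_is_top hA hur) // => i hi.
  have [b [hb hp]] := exists_maximal_above hS (ha i hi).1.
  by rewrite -(huniq b hb).
exists top; split; last split.
- split => // b hb [le _]; have [le' _] := Ap_below_top hS hg ha P hb.
  by apply/eqP; rewrite eqn_leq le le'.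
- by move=> b [hb hmax]; symmetry; apply: hmax => //; exact: Ap_below_top.
- exact: (Ap_unique_rep hS hg ha P P).
Qed.

(* (iii) <-> corner in Ap(S): symmetry makes f + m an Apery element
   dominating each alpha_i g_i; conversely every gap x is congruent to an
   Apery element w > x, and top - x = (top - w) + (w - x) lies in S. *)
Lemma symmetric_unique_iff_top f : is_frobenius S f ->
  (symmetric_sg S f /\ Ap_unique_expression S gs) <-> Ap S mult top.
Proof.
move=> hf; have mpos := mult_pos hS hg ha; have Sm := S_mult hS hg ha.
split=> [[hsym huq] | P].
- have [a [ea Sa]] : inZ S (f + Z.of_nat mult)%Z by apply/hsym => -[n [en _]]; lia.
  have hA : Ap S mult a.
    by split => // -[h1 h2]; apply: hf.1; exists (a - mult); split => //; lia.
  rewrite -(unique_rep_dominating_is_top hA (huq a hA)) // => i hi.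
  have [hw _] := ha i hi; set w := alpha i * nth 0 gs i in hw *.
  have [n [en Sn]] : inZ S (f + Z.of_nat mult - Z.of_nat w)%Z.
    apply/hsym => -[n [en Sn]]; apply: hw.2; split; first lia.
    by have -> : w - mult = n by lia.
  by split; [lia | have -> : a - w = n by lia].
- split=> [x | s hs]; last exact: (Ap_unique_rep hS hg ha P hs).
  have ftop := frobenius_of_top hf P.
  split=> [[n1 [e1 S1]] [n2 [e2 S2]] | hn].
    by apply: hf.1; exists (n1 + n2); split; [lia | exact: S_add].
  apply: NNPP => hx; apply: hn.
  case: (Z.lt_ge_cases x 0) => xneg; first by apply: hf.2; lia.
  have [k ek] : exists k, x = Z.of_nat k by exists (Z.to_nat x); lia.
  have nk : ~ S k by move=> Sk; apply: hx; exists k.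
  have [w [hw ew]] := Ap_res_exists hS mpos k.
  have [j ej] := Ap_above_gap hS Sm mpos hw nk ew.
  have [le Sd] := Ap_below_top hS hg ha P hw.
  exists ((top - w) + j * mult); split; first by rewrite mulSn in ej; lia.
  by apply: S_add => //; exact: S_mul.
Qed.

Lemma frobenius_iff_top f : is_frobenius S f ->
  (f + Z.of_nat mult = Z.of_nat top)%Z <-> Ap S mult top.
Proof.
move=> hf; split=> [e | ]; last exact: frobenius_of_top.
have [n [en Sn]] := hf.2 (Z.of_nat top) ltac:(have := mult_pos hS hg ha; lia).
have -> : top = n by lia.
by split => // -[h1 h2]; apply: hf.1; exists (n - mult); split => //; lia.
Qed.

End Equivalences.

Fixpoint box_vectors (bs : seq nat) : seq (seq nat) :=
  if bs is b :: bs' then [seq x :: v | x <- iota 0 b.+1, v <- box_vectors bs']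
  else [:: [::]].

Lemma box_vectors_cons b bs :
  box_vectors (b :: bs) = [seq x :: v | x <- iota 0 b.+1, v <- box_vectors bs].
Proof. by []. Qed.

Lemma size_box_vectors bs : size (box_vectors bs) = \prod_(b <- bs) b.+1.
Proof.
elim: bs => [|b bs IH]; first by rewrite big_nil.
by rewrite box_vectors_cons size_allpairs size_iota IH big_cons.
Qed.

Lemma uniq_box_vectors bs : uniq (box_vectors bs).
Proof.
elim: bs => [//|b bs IH]; rewrite box_vectors_cons.
apply: allpairs_uniq => //; first exact: iota_uniq.
by move=> [x v] [y w] _ _ /= [-> ->].
Qed.

Lemma mem_box_vectors bs v : v \in box_vectors bs <->
  size v = size bs /\ forall i, i < size bs -> nth 0 v i <= nth 0 bs i.
Proof.
elim: bs v => [|b bs IH] v.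
  by rewrite /= inE; split => [/eqP -> | [/size0nil ->]].
split.
- rewrite box_vectors_cons => /allpairsP [[x v'] [hx hv' ->]] /=.
  have [sz hb] := (IH v').1 hv'; rewrite sz; split => // -[|i] hi /=.
  + by move: hx; rewrite mem_iota.
  + exact: hb.
- case: v => [|x v'] [sz hb] //; rewrite box_vectors_cons; apply: allpairs_f.
  + by rewrite mem_iota /= add0n ltnS (hb 0 isT).
  + by apply/IH; split=> [| i hi]; [case: sz | apply: (hb i.+1)].
Qed.

Lemma uniq_map_inj (T1 T2 : eqType) (f : T1 -> T2) s x y :
  uniq (map f s) -> x \in s -> y \in s -> f x = f y -> x = y.
Proof.
elim: s => [//|a s IH] /= /andP [na u].
rewrite !inE => /orP [/eqP ->|hx] /orP [/eqP ->|hy] // e.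
- by case/negP: na; rewrite e map_f.
- by case/negP: na; rewrite -e map_f.
- exact: IH.
Qed.

Definition vec_of (gs : seq nat) (lam : nat -> nat) : seq nat :=
  [seq lam i | i <- iota 0 (size gs)].

Lemma nth_vec_of gs lam i : i < size gs -> nth 0 (vec_of gs lam) i = lam i.
Proof. by move=> h; rewrite (nth_map 0) ?size_iota // nth_iota. Qed.

Lemma wsum_vec_of gs lam : wsum gs (fun i => nth 0 (vec_of gs lam) i) = wsum gs lam.
Proof. by apply: wsum_ext => i hi; exact: nth_vec_of. Qed.

Lemma in_box_vectors gs alpha lam : in_box gs alpha lam ->
  vec_of gs lam \in box_vectors (vec_of gs (corner alpha)).
Proof.
move=> [h0 hb]; apply/mem_box_vectors; rewrite /vec_of !size_map; split => // i.
rewrite size_iota => hi; rewrite -!/(vec_of _ _) !nth_vec_of // /corner.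
by case: eqP => [->|ne]; [rewrite h0 | apply: hb; lia].
Qed.

Lemma box_vectors_in_box gs alpha v :
  v \in box_vectors (vec_of gs (corner alpha)) ->
  size v = size gs /\ in_box gs alpha (fun i => nth 0 v i).
Proof.
move/mem_box_vectors; rewrite /vec_of size_map size_iota => -[sz hb]; split => //.
have hb' i : i < size gs -> nth 0 v i <= corner alpha i.
  by move=> hi; have := hb i hi; rewrite -/(vec_of _ _) nth_vec_of.
split.
- case: (posnP (size gs)) => h; first by rewrite nth_default // sz h.
  by have := hb' 0 h; rewrite /corner /=; lia.
- by move=> i /andP [h1 h2]; have := hb' i h2; rewrite /corner; case: eqP => //; lia.
Qed.

Lemma card_box gs alpha : 0 < size gs ->
  size (box_vectors (vec_of gs (corner alpha))) = \prod_(1 <= i < size gs) (alpha i).+1.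
Proof.
move=> h; rewrite size_box_vectors /vec_of big_map -(subn0 (size gs)) -/(index_iota _ _).
rewrite subn0 big_ltn // /corner /= mul1n.
by apply: eq_big_nat => i /andP [h1 _]; case: eqP => // e; lia.
Qed.

(* The residue map box -> Z/mZ is onto (every
   residue class has an Apery element, whose representation is in the box).
   If the box has exactly m points the map is one-to-one, so the Apery element
   congruent to the corner is the corner itself; if the corner is Apery, the
   map is one-to-one (box elements are distinct Apery elements), so the box
   has m points. *)
Lemma card_box_iff_top S gs alpha (hS : numerical_semigroup S)
  (hg : generates S gs) (ha : is_alpha S gs alpha) :
  nth 0 gs 0 = \prod_(1 <= i < size gs) (alpha i).+1 <->
  Ap S (nth 0 gs 0) (wsum gs (corner alpha)).
Proof.
have mpos := mult_pos hS hg ha; have sz := size_gs_pos hS hg ha.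
have Sm := S_mult hS hg ha.
set m := nth 0 gs 0 in mpos Sm *.
set box := box_vectors (vec_of gs (corner alpha)).
pose res v := wsum gs (fun i => nth 0 v i) %% m.
have onto : {subset iota 0 m <= map res box}.
  move=> r; rewrite mem_iota add0n => /andP [_ hr].
  have [w [hw ew]] := Ap_res_exists hS mpos r.
  have [lam e] := wsum_of_S hg hw.1.
  have -> : r = res (vec_of gs lam) by rewrite /res wsum_vec_of -e ew modn_small.
  by apply: map_f; apply: in_box_vectors (Ap_rep_in_box hS hg ha hw e).
have card_res : size (map res box) = \prod_(1 <= i < size gs) (alpha i).+1.
  by rewrite size_map card_box.
split=> [hm | P].
- have U : uniq (map res box).
    by apply: (leq_size_uniq (iota_uniq 0 m) onto); rewrite size_iota card_res hm.
  have [w [hw ew]] := Ap_res_exists hS mpos (wsum gs (corner alpha)).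
  have [lam e] := wsum_of_S hg hw.1.
  have ev : vec_of gs lam = vec_of gs (corner alpha).
    apply: (uniq_map_inj U); try apply: in_box_vectors.
    + exact: (Ap_rep_in_box hS hg ha hw e).
    + exact: corner_in_box.
    + by rewrite /res !wsum_vec_of -e ew.
  by rewrite -(wsum_vec_of gs (corner alpha)) -ev wsum_vec_of -e.
- have U : uniq (map res box).
    rewrite map_inj_in_uniq ?uniq_box_vectors // => v1 v2 h1 h2 e.
    have [s1 b1] := box_vectors_in_box h1; have [s2 b2] := box_vectors_in_box h2.
    have es := Ap_res_unique hS Sm (box_below_top hS hg P b1).1
                                   (box_below_top hS hg P b2).1 e.
    apply: (eq_from_nth (x0 := 0)); first by rewrite s1 s2.
    by move=> i hi; apply: (box_rep_inj hS hg ha P b1 b2 es); rewrite -s1.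
  have into : {subset map res box <= iota 0 m}.
    by move=> r /mapP [v _ ->]; rewrite mem_iota add0n /=; exact: ltn_pmod.
  have := uniq_leq_size U into; have := uniq_leq_size (iota_uniq 0 m) onto.
  by rewrite card_res size_iota; lia.
Qed.

Unset Implicit Arguments.

Theorem mainTheorem2 (S : nat -> Prop) (gs : seq nat) (f : Z) (alpha : nat -> nat)
  (hS : numerical_semigroup S) (hgs : min_gen_system S gs)
  (hf : is_frobenius S f) (halpha : is_alpha S gs alpha) :
  let m := nth 0 gs 0 in
  let ci := alpha_rectangular S gs alpha in
  let cii := (exists a, Ap_maximal S m a /\
                 (forall b, Ap_maximal S m b -> b = a) /\ unique_rep gs a) in
  let ciii := symmetric_sg S f /\ Ap_unique_expression S gs in
  let civ := (f + Z.of_nat m = Z.of_nat (\sum_(1 <= i < size gs) alpha i * nth 0 gs i))%Z in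
  let cv := m = \prod_(1 <= i < size gs) (alpha i).+1 in
  (ci <-> cii) /\ (cii <-> ciii) /\ (ciii <-> civ) /\ (civ <-> cv).
Proof.
have hg : generates S gs by case: hgs => _ [].
have top_sum : wsum gs (corner alpha) = \sum_(1 <= i < size gs) alpha i * nth 0 gs i.
  exact: wsum_drop0 (size_gs_pos hS hg halpha).
have h1 := rectangular_iff_top hS hg halpha.
have h2 := unique_maximal_iff_top hS hg halpha.
have h3 := symmetric_unique_iff_top hS hg halpha hf.
have h4 := frobenius_iff_top hS hg halpha hf.
have h5 := card_box_iff_top hS hg halpha.
move=> m ci cii ciii civ cv; rewrite /ci /cii /ciii /civ /cv /m -top_sum.
tauto.
Qed.
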